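(* Let $H$ be a monoid and $X,Y\in\mathcal{P}_{\mathrm{fin},1}(H)$. Then: (i) if $X$ divides $Y$ in $\mathcal{P}_{\mathrm{fin},1}(H)$, then $X\subseteq Y$; (ii) $\mathcal{P}_{\mathrm{fin},1}(H)$ is reduced and Dedekind-finite; (iii) $X$ and $Y$ are associated in $\mathcal{P}_{\mathrm{fin},1}(H)$ if and only if $X=Y$; (iv) $X$ is irreducible in $\mathcal{P}_{\mathrm{fin},1}(H)$ if and only if $X\neq\{1_H\}$ and $X\neq YZ$ for all $Y,Z\in\mathcal{P}_{\mathrm{fin},1}(H)$ with $Y\subsetneq X$ and $Z\subsetneq X$; (v) $X$ is irreducible in $\mathcal{P}_{\mathrm{fin},1}(H)$ if and only if it is a quark; (vi) if $X$ is irreducible in $\mathcal{P}_{\mathrm{fin},1}(H)$ but not an atom, then $X^2=X$.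
   Context: For a monoid $H$, $\mathcal{P}_{\mathrm{fin},1}(H)$ denotes the set of all non-empty finite subsets of $H$ containing $1_H$, a monoid under $XY=\{xy:x\in X,y\in Y\}$ with identity $\{1_H\}$. In a monoid $M$: $x\mid_M y$ iff $y\in MxM=\{uxv:u,v\in M\}$; $x,y$ are associated if each divides the other; $x$ properly divides $y$ if $x\mid_M y$ and $y\nmid_M x$. A unit-divisor is an element dividing $1_M$; other elements are non-unit-divisors. An irreducible is a non-unit-divisor $a$ such that $a\neq xy$ for all non-unit-divisors $x,y$ properly dividing $a$. An atom is a non-unit-divisor that is not a product of two non-unit-divisors. A quark is a non-unit-divisor that is not properly divided by any non-unit-divisor. $M$ is reduced if its only unit is $1_M$, and Dedekind-finite if $xy=1_M$ implies $yx=1_M$. *)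

From HB Require Import structures.
From mathcomp Require Import all_boot.
From mathcomp Require Import finmap.

Set Implicit Arguments.
Unset Strict Implicit.
Unset Printing Implicit Defensive.

Local Open Scope fset_scope.
Local Open Scope group_scope.

Section MonoidNotions.
Variable M : monoidType.

Definition mdvd (x y : M) : Prop := exists u v : M, y = u * x * v.

Definition massoc (x y : M) : Prop := mdvd x y /\ mdvd y x.

Definition mpdvd (x y : M) : Prop := mdvd x y /\ ~ mdvd y x.

Definition unit_divisor (x : M) : Prop := mdvd x 1.

Definition irreducible (a : M) : Prop :=
  ~ unit_divisor a /\
  forall x y : M, ~ unit_divisor x -> ~ unit_divisor y ->
    mpdvd x a -> mpdvd y a -> a <> x * y.

Definition atom (a : M) : Prop :=
  ~ unit_divisor a /\
  forall x y : M, ~ unit_divisor x -> ~ unit_divisor y -> a <> x * y.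

Definition quark (a : M) : Prop :=
  ~ unit_divisor a /\ forall x : M, ~ unit_divisor x -> ~ mpdvd x a.

Definition munit (x : M) : Prop := exists y : M, x * y = 1 /\ y * x = 1.

Definition reduced : Prop := forall x : M, munit x -> x = 1.

Definition dedekind_finite : Prop := forall x y : M, x * y = 1 -> y * x = 1.

End MonoidNotions.

Section Pfin1.
Variable H : monoidType.

(* non-empty finite subsets of H containing 1_H (non-emptiness is implied) *)
Record pfin1 := Pfin1 { pval :> {fset H}; pval_one : (1 : H) \in pval }.

HB.instance Definition _ := [isSub for pval].
HB.instance Definition _ := [Choice of pfin1 by <:].

Definition setmul (X Y : {fset H}) : {fset H} := [fset x * y | x in X, y in Y].

Lemma setmul_one (X Y : pfin1) : (1 : H) \in setmul X Y.
Proof.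
rewrite /setmul -[X in X \in _](mulg1 1).
by apply: in_imfset2; [exact: pval_one | exact: pval_one].
Qed.

Definition pmul (X Y : pfin1) : pfin1 := Pfin1 (setmul_one X Y).

Lemma pone_in : (1 : H) \in [fset (1 : H)].
Proof. by rewrite in_fset1. Qed.

Definition pone : pfin1 := Pfin1 pone_in.

Lemma setmulP (X Y : {fset H}) (z : H) :
  reflect (exists x y, [/\ x \in X, y \in Y & z = x * y]) (z \in setmul X Y).
Proof.
apply: (iffP (imfset2P _ _ _ _ _)).
  by move=> [x xX [y yY ->]]; exists x, y.
by move=> [x [y [xX yY ->]]]; exists x => //; exists y.
Qed.

Lemma pmulA : associative pmul.
Proof.
move=> X Y Z; apply: val_inj => /=; apply/fsetP => w.
apply/setmulP/setmulP.
  move=> [x [yz [xX /setmulP [y [z [yY zZ ->]]] ->]]].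
  exists (x * y), z; split => //; last by rewrite mulgA.
  by apply/setmulP; exists x, y.
move=> [xy [z [/setmulP [x [y [xX yY ->]]] zZ ->]]].
exists x, (y * z); split => //; last by rewrite mulgA.
by apply/setmulP; exists y, z.
Qed.

Lemma pmul1 : left_id pone pmul.
Proof.
move=> X; apply: val_inj => /=; apply/fsetP => w.
apply/setmulP/idP.
  by move=> [o [x [/fset1P -> xX ->]]]; rewrite mul1g.
by move=> wX; exists 1, w; split => //; [exact: pone_in | rewrite mul1g].
Qed.

Lemma pmulg1 : right_id pone pmul.
Proof.
move=> X; apply: val_inj => /=; apply/fsetP => w.
apply/setmulP/idP.
  by move=> [x [o [xX /fset1P -> ->]]]; rewrite mulg1.
by move=> wX; exists w, 1; split => //; [exact: pone_in | rewrite mulg1].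
Qed.

HB.instance Definition _ := isMonoid.Build pfin1 pmulA pmul1 pmulg1.

End Pfin1.

From HB Require Import structures.
From mathcomp Require Import all_boot.
From mathcomp Require Import finmap.

Set Implicit Arguments.
Unset Strict Implicit.
Unset Printing Implicit Defensive.

Local Open Scope fset_scope.
Local Open Scope group_scope.

(* Every element of P_{fin,1}(H) contains 1, so a product contains both of its
   factors: divisibility implies inclusion, and only {1} divides {1}.  As
   proper divisors are proper subsets, an irreducible X = AB forces A = X or
   B = X.  The key observation is that if X = XY with Y <> {1}, then for any
   y \in Y other than 1 also X = (X \ {y} u {1}) Y, whose left factor is not X;
   hence Y = X.  This absorption property rules out proper non-unit divisors
   of an irreducible X, and gives X^2 = X when X is not an atom. *)

Section MonoidDivisibility.
Variable M : monoidType.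
Implicit Types x y : M.

Lemma mdvd_refl x : mdvd x x.
Proof. by exists 1, 1; rewrite mul1g mulg1. Qed.

Lemma mdvd_mulr x y : mdvd x (x * y).
Proof. by exists 1, y; rewrite mul1g. Qed.

Lemma mdvd_mull x y : mdvd y (x * y).
Proof. by exists x, 1; rewrite mulg1. Qed.

End MonoidDivisibility.

Section PowerMonoid.
Variable H : monoidType.
Implicit Types X Y Z A : pfin1 H.

Lemma pfin1_fsubset_anti X Y :
  pval X `<=` pval Y -> pval Y `<=` pval X -> X = Y.
Proof. by move=> XY YX; apply/val_inj/eqP; rewrite eqEfsubset XY YX. Qed.

Lemma setmulS (A B C D : {fset H}) :
  A `<=` C -> B `<=` D -> setmul A B `<=` setmul C D.
Proof.
move=> /fsubsetP AC /fsubsetP BD.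
apply/fsubsetP => _ /setmulP[x [y [xA yB ->]]].
by apply/setmulP; exists x, y; split; [apply: AC | apply: BD |].
Qed.

Lemma pfin1_mul_subl X Y : pval X `<=` pval (X * Y).
Proof.
apply/fsubsetP => x xX; apply/setmulP; exists x, 1.
by split; [|exact: pval_one | rewrite mulg1].
Qed.

Lemma pfin1_mul_subr X Y : pval Y `<=` pval (X * Y).
Proof.
apply/fsubsetP => y yY; apply/setmulP; exists 1, y.
by split; [exact: pval_one | | rewrite mul1g].
Qed.

Lemma pfin1_subU_mul X Y : pval X `|` pval Y `<=` pval (X * Y).
Proof.
by apply/fsubUsetP; split; [exact: pfin1_mul_subl | exact: pfin1_mul_subr].
Qed.

Lemma mdvd_fsubset X Y : mdvd X Y -> pval X `<=` pval Y.
Proof.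
move=> [U [V ->]].
exact: fsubset_trans (pfin1_mul_subr U X) (pfin1_mul_subl (U * X) V).
Qed.

Lemma massoc_pfin1 X Y : massoc X Y <-> X = Y.
Proof.
split; last by move=> ->; split; exact: mdvd_refl.
by move=> [/mdvd_fsubset XY /mdvd_fsubset YX]; exact: pfin1_fsubset_anti.
Qed.

Lemma pval_eq1 X : pval X = [fset 1] <-> X = 1.
Proof. by split=> [X1 | ->]; first exact: val_inj. Qed.

Lemma pfin1_sub1 X : pval X `<=` [fset 1] -> X = 1.
Proof.
by move=> X_sub1; apply: pfin1_fsubset_anti => //; rewrite fsub1set pval_one.
Qed.

Lemma unit_divisor_pfin1 X : unit_divisor X <-> X = 1.
Proof.
split; last by move=> ->; exact: mdvd_refl.
by move=> /mdvd_fsubset; exact: pfin1_sub1.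
Qed.

Lemma pfin1_mul_eq1 X Y : X * Y = 1 -> X = 1 /\ Y = 1.
Proof.
move=> XY1; split; apply/unit_divisor_pfin1; rewrite /unit_divisor -XY1.
  exact: mdvd_mulr.
exact: mdvd_mull.
Qed.

Lemma mpdvd_fproper X Y : mpdvd X Y -> pval X `<` pval Y.
Proof.
move=> [XY YnX]; rewrite fproperEneq mdvd_fsubset // andbT.
by apply/eqP => /val_inj eXY; apply: YnX; rewrite eXY; exact: mdvd_refl.
Qed.

Lemma mdvd_neq_mpdvd X Y : mdvd X Y -> X <> Y -> mpdvd X Y.
Proof.
move=> XY XnY; split=> // YX.
by apply: XnY; apply: pfin1_fsubset_anti; exact: mdvd_fsubset.
Qed.

Lemma pfin1_neq1P Y : Y <> 1 -> exists2 y, y \in pval Y & y != 1.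
Proof.
move=> Yn1; have /fsubsetPn[y yY] : ~~ (pval Y `<=` [fset 1]).
  by apply/negP => /pfin1_sub1.
by rewrite in_fset1; exists y.
Qed.

Definition pfin1_del X (y : H) : pfin1 H := Pfin1 (fset1U1 1 (pval X `\ y)).

Lemma pfin1_del_sub X y : pval (pfin1_del X y) `<=` pval X.
Proof.
apply/fsubsetP => z; rewrite in_fset1U in_fsetD1 => /orP[/eqP -> |/andP[]//].
exact: pval_one.
Qed.

Lemma pfin1_del_coverU X Y y :
  y \in pval Y -> pval X `<=` pval (pfin1_del X y) `|` pval Y.
Proof.
move=> yY; apply/fsubsetP => z zX.
rewrite in_fsetU in_fset1U in_fsetD1 zX andbT.
by case: (eqVneq z y) => [-> | _]; rewrite /= ?yY ?orbT.
Qed.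

Lemma pfin1_del_neq X y : y != 1 -> y \in pval X -> pfin1_del X y <> X.
Proof.
move=> yn1 yX eX; move: yX; rewrite -{1}eX /= in_fset1U in_fsetD1 eqxx.
by rewrite (negbTE yn1).
Qed.

Section Irreducible.
Variable X : pfin1 H.
Hypothesis irrX : irreducible X.

Lemma irreducible_mul_eq A Z : X = A * Z -> A = X \/ Z = X.
Proof.
have [_ irr] := irrX; move=> XAZ.
case: (eqVneq A X) => [|/eqP AnX]; [by left | right].
case: (eqVneq Z X) => [// | /eqP ZnX]; exfalso.
have nudA : ~ unit_divisor A.
  by move/unit_divisor_pfin1 => A1; apply: ZnX; rewrite XAZ A1 mul1g.
have nudZ : ~ unit_divisor Z.
  by move/unit_divisor_pfin1 => Z1; apply: AnX; rewrite XAZ Z1 mulg1.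
apply: (irr A Z nudA nudZ _ _ XAZ).
  by apply: mdvd_neq_mpdvd AnX; rewrite XAZ; exact: mdvd_mulr.
by apply: mdvd_neq_mpdvd ZnX; rewrite XAZ; exact: mdvd_mull.
Qed.

Lemma irreducible_absorb_r Y : X * Y = X -> Y <> 1 -> Y = X.
Proof.
move=> XYX /pfin1_neq1P[y yY yn1].
have yX : y \in pval X.
  by rewrite -XYX; exact: fsubsetP (pfin1_mul_subr X Y) y yY.
have XAY : X = pfin1_del X y * Y.
  apply: pfin1_fsubset_anti.
    exact: fsubset_trans (pfin1_del_coverU X yY) (pfin1_subU_mul _ _).
  by rewrite -{2}XYX; exact: setmulS (pfin1_del_sub X y) (fsubset_refl _).
by case: (irreducible_mul_eq XAY) => // /(pfin1_del_neq yn1 yX).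
Qed.

Lemma irreducible_absorb_l Y : Y * X = X -> Y <> 1 -> Y = X.
Proof.
move=> YXX /pfin1_neq1P[y yY yn1].
have yX : y \in pval X.
  by rewrite -YXX; exact: fsubsetP (pfin1_mul_subl Y X) y yY.
have XYA : X = Y * pfin1_del X y.
  apply: pfin1_fsubset_anti.
    apply: fsubset_trans (pfin1_del_coverU X yY) _.
    by rewrite fsetUC pfin1_subU_mul.
  by rewrite -{2}YXX; exact: setmulS (fsubset_refl _) (pfin1_del_sub X y).
by case: (irreducible_mul_eq XYA) => // /(pfin1_del_neq yn1 yX).
Qed.

Lemma irreducible_quark : quark X.
Proof.
split; first by have [] := irrX.
move=> Y nudY [[U [V XUYV]] XnY].
have YnX : Y <> X by move=> YX; apply: XnY; rewrite YX; exact: mdvd_refl.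
have Yn1 : Y <> 1 by move=> Y1; apply: nudY; exact/unit_divisor_pfin1.
case: (irreducible_mul_eq XUYV) => [UYX | VX]; apply: YnX.
  case: (irreducible_mul_eq (esym UYX)) => [UX | //].
  by apply: irreducible_absorb_r Yn1; rewrite -{1}UX.
apply: irreducible_absorb_l Yn1.
apply: pfin1_fsubset_anti; last exact: pfin1_mul_subr.
by rewrite {2}XUYV VX -mulgA; exact: pfin1_mul_subr.
Qed.

Lemma irreducible_not_atom_idem : ~ atom X -> X * X = X.
Proof.
move=> natomX; case: (eqVneq (X * X) X) => [// | /eqP XXnX]; case: natomX.
split=> [|A Z nudA nudZ XAZ]; first by have [] := irrX.
have An1 : A <> 1 by move=> A1; apply: nudA; exact/unit_divisor_pfin1.
have Zn1 : Z <> 1 by move=> Z1; apply: nudZ; exact/unit_divisor_pfin1.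
apply: XXnX; case: (irreducible_mul_eq XAZ) => [AX | ZX].
  have ZX : Z = X by apply: irreducible_absorb_r Zn1; rewrite -{1}AX -XAZ.
  by rewrite {3}XAZ AX ZX.
have AX : A = X by apply: irreducible_absorb_l An1; rewrite -{1}ZX -XAZ.
by rewrite {3}XAZ AX ZX.
Qed.

End Irreducible.

Lemma irreducible_pfin1P X :
  irreducible X <->
  pval X <> [fset (1 : H)] /\
  forall Y Z, pval Y `<` pval X -> pval Z `<` pval X -> X <> Y * Z.
Proof.
split=> [irrX | [Xn1 irr]].
  split=> [/pval_eq1 X1 | Y Z YX ZX XYZ].
    by have [nudX _] := irrX; apply: nudX; exact/unit_divisor_pfin1.
  have [eqY | eqZ] := irreducible_mul_eq irrX XYZ.
    by move: YX; rewrite eqY fproperEneq eqxx.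
  by move: ZX; rewrite eqZ fproperEneq eqxx.
split=> [/unit_divisor_pfin1/pval_eq1 // | x y _ _ /mpdvd_fproper xX].
by move=> /mpdvd_fproper yX; exact: irr.
Qed.

Lemma irreducible_iff_quark X : irreducible X <-> quark X.
Proof.
split=> [|[nudX noprop]]; first exact: irreducible_quark.
by split=> // x y nudx _ /(noprop x nudx).
Qed.

End PowerMonoid.

Theorem lemma2p2 (H : monoidType) :
  (* (i) *)
  (forall X Y : pfin1 H, mdvd X Y -> pval X `<=` pval Y) /\
  (* (ii) *)
  (reduced (pfin1 H) /\ dedekind_finite (pfin1 H)) /\
  (* (iii) *)
  (forall X Y : pfin1 H, massoc X Y <-> X = Y) /\
  (* (iv) *)
  (forall X : pfin1 H,
     irreducible X <->
     (pval X <> [fset (1 : H)] /\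
      forall Y Z : pfin1 H, pval Y `<` pval X -> pval Z `<` pval X -> X <> Y * Z)) /\
  (* (v) *)
  (forall X : pfin1 H, irreducible X <-> quark X) /\
  (* (vi) *)
  (forall X : pfin1 H, irreducible X -> ~ atom X -> X * X = X).
Proof.
split; first by move=> X Y; exact: mdvd_fsubset.
split.
  split=> [X [Y [/pfin1_mul_eq1[] //]] | X Y /pfin1_mul_eq1[-> ->]].
  exact: mulg1.
split; first by move=> X Y; exact: massoc_pfin1.
split; first exact: irreducible_pfin1P.
split; first exact: irreducible_iff_quark.
by move=> X; exact: irreducible_not_atom_idem.
Qed.
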